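(* Let $\phi$ be a real function on finite strings over $\{1,\dots,k_0\}$ that is increasing, i.e. $\phi(u)\le\phi(w)$ whenever $u$ is a contiguous substring of $w$. For the stationary mean $\mu$ of the RHA process and all $n\ge1$, $j\ge1$, $$\mathbb E_P\,\phi(X^{n-1}_j)\le\mathbb E_\mu\,\phi(\xi_{1:2^n})\le\mathbb E_P\,\phi(X^{n+1}_j).$$
   Context: Random hierarchical association (RHA) process. Fix positive integers $(k_n)_{n\ge0}$ (perplexities) with $k_{n-1}\le k_n\le k_{n-1}^2$ for all $n\ge1$. On a probability space $(\Omega,\mathcal J,P)$ let, for each $n\ge1$, $(L_{nj},R_{nj})_{j=1}^{k_n}$ be the lexicographically sorted enumeration of a uniformly random $k_n$-element subset of $\{1,\dots,k_{n-1}\}^2$ (each of the $\binom{k_{n-1}^2}{k_n}$ subsets equally likely), independently over $n$. Let $(C_n)_{n\ge0}$ be independent, independent of all $(L_{nj},R_{nj})$, with $C_n$ uniform on $\{1,\dots,k_n\}$. Define strings $Y^0_j=j$ (length 1) for $1\le j\le k_0$ and $Y^n_j=Y^{n-1}_{L_{nj}}Y^{n-1}_{R_{nj}}$ (concatenation). The RHA process is $\mathcal X=Y^0_{C_0}Y^1_{C_1}Y^2_{C_2}\cdots=X_1X_2X_3\cdots$, $X_{k:l}=X_k\cdots X_l$; for $n\ge0$, $j\ge1$, $X^n_j=X_{j2^n:(j+1)2^n-1}$. The limits $\mu(x_{1:m})=\lim_{N\to\infty}\frac1N\sum_{i=1}^NP(X_{i:i+m-1}=x_{1:m})$ exist and define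 a stationary probability measure $\mu$ on $\{1,\dots,k_0\}^{\mathbb N}$ (the stationary mean), with coordinate maps $\xi_i$. *)

(* Reals + lists.  All probabilities are finite uniform averages. *)
From Stdlib Require Import Reals List Arith.
Import ListNotations.
Open Scope R_scope.

Fixpoint choose {A : Type} (r : nat) (l : list A) : list (list A) :=
  match l with
  | [] => match r with O => [[]] | S _ => [] end
  | x :: l' => match r with
               | O => [[]]
               | S r' => map (cons x) (choose r' l') ++ choose r l'
               end
  end.

Definition pairs (m : nat) : list (nat * nat) :=
  flat_map (fun a => map (fun b => (a, b)) (seq 1 m)) (seq 1 m).

(* all possible values of [S_1; ...; S_N], S_n = the sorted enumeration
   (L_{nj},R_{nj})_{j=1}^{k_n} of a k_n-subset of {1..k_{n-1}}^2 *)
Fixpoint levels (k : nat -> nat) (N : nat) : list (list (list (nat * nat))) :=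
  match N with
  | O => [[]]
  | S N' => flat_map (fun ss => map (fun s => ss ++ [s]) (choose (k N) (pairs (k N'))))
                     (levels k N')
  end.

(* all possible values of [C_0; ...; C_N], C_n in {1..k_n} *)
Fixpoint cvals (k : nat -> nat) (N : nat) : list (list nat) :=
  match N with
  | O => map (fun c => [c]) (seq 1 (k O))
  | S N' => flat_map (fun cs => map (fun c => cs ++ [c]) (seq 1 (k N))) (cvals k N')
  end.

(* sample space of all random choices up to level N (uniform, independent) *)
Definition Omega (k : nat -> nat) (N : nat) :=
  list_prod (levels k N) (cvals k N).

(* Y^n_j built from the level choices Ss = [S_1; ...] *)
Fixpoint Ystr (Ss : list (list (nat * nat))) (n j : nat) : list nat :=
  match n with
  | O => [j]
  | S n' => let '(l, r) := nth (j - 1) (nth n' Ss []) (0%nat, 0%nat) in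
            Ystr Ss n' l ++ Ystr Ss n' r
  end.

(* X_1 ... X_{2^{N+1}-1} = Y^0_{C_0} Y^1_{C_1} ... Y^N_{C_N} *)
Definition prefix (N : nat) (w : list (list (nat * nat)) * list nat) : list nat :=
  flat_map (fun n => Ystr (fst w) n (nth n (snd w) 0%nat)) (seq 0 (S N)).

(* X_{a:a+len-1} (1-indexed) *)
Definition window (N : nat) (w : list (list (nat * nat)) * list nat) (a len : nat)
  : list nat := firstn len (skipn (a - 1) (prefix N w)).

Definition sumR (l : list R) : R := fold_right Rplus 0 l.

Definition EP (k : nat -> nat) (N : nat)
  (f : list (list (nat * nat)) * list nat -> R) : R :=
  sumR (map f (Omega k N)) / INR (length (Omega k N)).

(* E_P g(X_{a:a+len-1}); levels up to a+len suffice since 2^{N+1}-1 >= N *)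
Definition EX (k : nat -> nat) (a len : nat) (g : list nat -> R) : R :=
  EP k (a + len) (fun w => g (window (a + len) w a len)).

Definition Pwin (k : nat -> nat) (i : nat) (x : list nat) : R :=
  EX k i (length x) (fun w => if list_eq_dec Nat.eq_dec w x then 1 else 0).

(* Cesaro average (1/N) sum_{i=1}^N P(X_{i:i+m-1} = x), indexed by N-1 *)
Definition cesaro (k : nat -> nat) (x : list nat) (N : nat) : R :=
  sumR (map (fun i => Pwin k i x) (seq 1 (S N))) / INR (S N).

Fixpoint words (k0 m : nat) : list (list nat) :=
  match m with
  | O => [[]]
  | S m' => flat_map (fun w => map (fun c => w ++ [c]) (seq 1 k0)) (words k0 m')
  end.

Definition over_alphabet (k0 : nat) (w : list nat) : Prop :=
  Forall (fun c => (1 <= c <= k0)%nat) w.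

Definition substring (u w : list nat) : Prop :=
  exists p s, w = p ++ u ++ s.

Definition str_increasing (k0 : nat) (phi : list nat -> R) : Prop :=
  forall u w, over_alphabet k0 w -> substring u w -> phi u <= phi w.

From Stdlib Require Import Reals List Arith Lia Lra.
Import ListNotations.
Open Scope R_scope.

(* Write [E_m] for the law of [Y^m_c] with [c] uniform on [{1..k_m}]. The aligned window
   [X^m_j] is a block of [Y^(m + log2 j)_(C_(m + log2 j))], and blocks of [Y^(m+d)_c] have law
   [E_m]: splitting [Y^(m+1)_c] as [Y^m_(L_c) Y^m_(R_c)] reduces everything to the fact that,
   for a uniform random set of pairs [(L_c, R_c)], both [(L_c, R_c)] and [(R_a, L_b)] (for
   independent uniform positions [a], [b], equal or not) are uniform on the grid. Hence two
   adjacent aligned blocks of length [2^m], whether inside one level or straddling two, have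
   law [E_(m+1)]. A window of length [2^n] contains an aligned window of length [2^(n-1)] and,
   once it starts beyond [2^n], lies inside an aligned window of length [2^(n+1)]; since [phi]
   is increasing, the expectations of [phi] on windows of length [2^n] are eventually squeezed
   between those under [E_(n-1)] and [E_(n+1)], and so is their Cesaro limit, which is the
   [mu]-expectation. *)

(** * Finite sums and uniform means *)

Definition sum_over {A} (l : list A) (f : A -> R) : R := sumR (map f l).
Definition mean {A} (l : list A) (f : A -> R) : R := sum_over l f / INR (length l).

Lemma sum_over_cons {A} (x : A) l f : sum_over (x :: l) f = f x + sum_over l f.
Proof. reflexivity. Qed.

Lemma sum_over_app {A} (l1 l2 : list A) f :
  sum_over (l1 ++ l2) f = sum_over l1 f + sum_over l2 f.
Proof.
  induction l1 as [|x l1 IH]; cbn [app]; [unfold sum_over; simpl; lra|].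
  rewrite !sum_over_cons, IH; lra.
Qed.

Lemma sum_over_ext_in {A} (l : list A) f g :
  (forall x, In x l -> f x = g x) -> sum_over l f = sum_over l g.
Proof. intros H. unfold sum_over. f_equal. apply map_ext_in, H. Qed.

Lemma sum_over_ext {A} (l : list A) f g : (forall x, f x = g x) -> sum_over l f = sum_over l g.
Proof. intros H; apply sum_over_ext_in; auto. Qed.

Lemma sum_over_plus {A} (l : list A) f g :
  sum_over l (fun x => f x + g x) = sum_over l f + sum_over l g.
Proof. induction l; [unfold sum_over; simpl; lra|]. rewrite !sum_over_cons, IHl; lra. Qed.

Lemma sum_over_scal {A} (l : list A) c f : sum_over l (fun x => c * f x) = c * sum_over l f.
Proof. induction l; [unfold sum_over; simpl; lra|]. rewrite !sum_over_cons, IHl; lra. Qed.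

Lemma sum_over_const {A} (l : list A) c : sum_over l (fun _ => c) = INR (length l) * c.
Proof.
  induction l; [unfold sum_over; simpl; lra|].
  rewrite sum_over_cons, IHl, length_cons, S_INR; lra.
Qed.

Lemma sum_over_map {A B} (l : list A) (h : A -> B) f :
  sum_over (map h l) f = sum_over l (fun x => f (h x)).
Proof. unfold sum_over; rewrite map_map; reflexivity. Qed.

Lemma sum_over_flat_map {A B} (l : list A) (g : A -> list B) f :
  sum_over (flat_map g l) f = sum_over l (fun a => sum_over (g a) f).
Proof.
  induction l; [reflexivity|]. simpl. rewrite sum_over_app, sum_over_cons, IHl; reflexivity.
Qed.

Lemma sum_over_le {A} (l : list A) f g :
  (forall x, In x l -> f x <= g x) -> sum_over l f <= sum_over l g.
Proof.
  induction l as [|x l IH]; intros H; [unfold sum_over; simpl; lra|].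
  rewrite !sum_over_cons.
  apply Rplus_le_compat; [apply H; left; reflexivity|].
  apply IH; intros; apply H; right; assumption.
Qed.

Lemma sum_over_comm {A B} (l : list A) (m : list B) f :
  sum_over l (fun x => sum_over m (fun y => f x y))
  = sum_over m (fun y => sum_over l (fun x => f x y)).
Proof.
  induction l as [|x l IH].
  - rewrite (sum_over_ext m _ (fun _ => 0)) by reflexivity.
    rewrite sum_over_const; unfold sum_over; simpl; lra.
  - rewrite sum_over_cons, IH, <- sum_over_plus.
    apply sum_over_ext; intros; rewrite sum_over_cons; reflexivity.
Qed.

Lemma length_flat_map_const {A B} (l : list A) (g : A -> list B) K :
  (forall a, length (g a) = K) -> length (flat_map g l) = (length l * K)%nat.
Proof. intros H; induction l; simpl; auto. rewrite length_app, H, IHl; lia. Qed.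

Lemma mean_ext_in {A} (l : list A) f g :
  (forall x, In x l -> f x = g x) -> mean l f = mean l g.
Proof. intros; unfold mean; rewrite (sum_over_ext_in l f g); auto. Qed.

Lemma mean_ext {A} (l : list A) f g : (forall x, f x = g x) -> mean l f = mean l g.
Proof. intros; apply mean_ext_in; auto. Qed.

Lemma mean_le {A} (l : list A) f g :
  (forall x, In x l -> f x <= g x) -> mean l f <= mean l g.
Proof.
  intros H; unfold mean, Rdiv. apply Rmult_le_compat_r; [|apply sum_over_le; auto].
  destruct (length l); [simpl; rewrite Rinv_0; lra|].
  left; apply Rinv_0_lt_compat, lt_0_INR; lia.
Qed.

Lemma mean_const_in {A} (l : list A) f c :
  l <> [] -> (forall x, In x l -> f x = c) -> mean l f = c.
Proof.
  intros Hl H. unfold mean. rewrite (sum_over_ext_in _ _ (fun _ => c)), sum_over_const by auto.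
  destruct l; [congruence|]. field. apply not_0_INR; simpl; lia.
Qed.

Lemma mean_const {A} (l : list A) c : l <> [] -> mean l (fun _ => c) = c.
Proof. intros; apply mean_const_in; auto. Qed.

Lemma mean_scal {A} (l : list A) c f : mean l (fun x => c * f x) = c * mean l f.
Proof. unfold mean; rewrite sum_over_scal; unfold Rdiv; lra. Qed.

Lemma mean_map {A B} (l : list A) (h : A -> B) f : mean (map h l) f = mean l (fun x => f (h x)).
Proof. unfold mean. rewrite sum_over_map, length_map. reflexivity. Qed.

Lemma mean_sum_over {A B} (l : list A) (m : list B) f :
  mean l (fun x => sum_over m (fun y => f x y)) = sum_over m (fun y => mean l (fun x => f x y)).
Proof.
  unfold mean, Rdiv. rewrite sum_over_comm, Rmult_comm, <- sum_over_scal.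
  apply sum_over_ext; intros; lra.
Qed.

Lemma mean_comm {A B} (l : list A) (m : list B) f :
  mean l (fun x => mean m (fun y => f x y)) = mean m (fun y => mean l (fun x => f x y)).
Proof.
  unfold mean at 2 4, Rdiv.
  rewrite (mean_ext l _ (fun x => / INR (length m) * sum_over m (fun y => f x y))) by (intros; lra).
  rewrite mean_scal, mean_sum_over, <- sum_over_scal.
  unfold mean, Rdiv. rewrite sum_over_scal. lra.
Qed.

Lemma mean_flat_map {A B C} (l : list A) (m : list B) (h : A -> B -> C) f :
  m <> [] ->
  mean (flat_map (fun a => map (h a) m) l) f = mean l (fun a => mean m (fun b => f (h a b))).
Proof.
  intros Hm. unfold mean at 1. rewrite sum_over_flat_map.
  rewrite (length_flat_map_const _ _ (length m)) by (intros; apply length_map).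
  rewrite (sum_over_ext l _ (fun a => INR (length m) * mean m (fun b => f (h a b)))).
  2:{ intros a. rewrite sum_over_map. unfold mean. field.
      destruct m; [congruence|]. apply not_0_INR; simpl; lia. }
  rewrite sum_over_scal, mult_INR. unfold mean.
  destruct l as [|x l]; [unfold sum_over; simpl; lra|].
  destruct m as [|y m]; [congruence|].
  field. split; apply not_0_INR; simpl; lia.
Qed.

Lemma mean_list_prod {A B} (l : list A) (m : list B) f :
  m <> [] -> mean (list_prod l m) f = mean l (fun a => mean m (fun b => f (a, b))).
Proof.
  intros Hm. rewrite <- mean_flat_map by auto. f_equal.
  induction l; simpl; auto. rewrite IHl; reflexivity.
Qed.

(** * Uniformly random subsets *)

Fixpoint binom (n r : nat) : nat :=
  match n, r with
  | _, O => 1%nat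
  | O, S _ => 0%nat
  | S n', S r' => (binom n' r' + binom n' (S r'))%nat
  end.

Lemma binom_0_r n : binom n 0 = 1%nat.
Proof. destruct n; reflexivity. Qed.

Lemma binom_pos n r : (r <= n)%nat -> (0 < binom n r)%nat.
Proof.
  revert r; induction n; intros r H; destruct r; simpl; try lia.
  specialize (IHn r ltac:(lia)); lia.
Qed.

Lemma binom_absorb n r : (S r * binom (S n) (S r) = S n * binom n r)%nat.
Proof.
  revert r; induction n; intros r.
  - destruct r; simpl; lia.
  - destruct r.
    + pose proof (IHn 0%nat). cbn [binom] in *. rewrite binom_0_r in *. lia.
    + pose proof (IHn r) as H1. pose proof (IHn (S r)) as H2.
      cbn [binom] in *. nia.
Qed.

Lemma choose_0 {A} (l : list A) : choose 0 l = [[]].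
Proof. destruct l; reflexivity. Qed.

Lemma length_choose {A} r (l : list A) : length (choose r l) = binom (length l) r.
Proof.
  revert r; induction l; intros r; destruct r; simpl; auto.
  rewrite length_app, length_map, !IHl. reflexivity.
Qed.

Lemma in_choose_length {A} r (l : list A) s : In s (choose r l) -> length s = r.
Proof.
  revert r s; induction l; intros r s H; destruct r; simpl in H.
  - destruct H as [<-|[]]; reflexivity.
  - destruct H.
  - destruct H as [<-|[]]; reflexivity.
  - apply in_app_or in H; destruct H as [H|H]; [|eauto].
    apply in_map_iff in H; destruct H as [s' [<- H]]. simpl; f_equal; eauto.
Qed.

Lemma in_choose_incl {A} r (l : list A) s x : In s (choose r l) -> In x s -> In x l.
Proof.
  revert r s; induction l; intros r s H Hx; destruct r; simpl in H.
  - destruct H as [<-|[]]; destruct Hx.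
  - destruct H.
  - destruct H as [<-|[]]; destruct Hx.
  - apply in_app_or in H; destruct H as [H|H]; [|right; eauto].
    apply in_map_iff in H; destruct H as [s' [<- H]].
    destruct Hx as [<-|Hx]; [left|right; eauto]; auto.
Qed.

Lemma choose_neq_nil {A} r (l : list A) : (r <= length l)%nat -> choose r l <> [].
Proof.
  intros H E. pose proof (length_choose r l) as L. rewrite E in L.
  pose proof (binom_pos _ _ H). simpl in L. lia.
Qed.

Lemma sum_choose_sum {A} (h : A -> R) l x r :
  sum_over (choose (S r) (x :: l)) (fun s => sum_over s h)
  = INR (binom (length l) r) * sum_over (x :: l) h.
Proof.
  revert x r; induction l as [|y l IH]; intros x r.
  - destruct r; unfold sum_over; simpl; lra.
  - change (choose (S r) (x :: y :: l)) with
      (map (cons x) (choose r (y :: l)) ++ choose (S r) (y :: l)).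
    rewrite sum_over_app, sum_over_map, IH.
    rewrite (sum_over_ext _ (fun s => sum_over (x :: s) h) (fun s => h x + sum_over s h))
      by (intros; apply sum_over_cons).
    rewrite sum_over_plus, sum_over_const, length_choose. destruct r.
    + rewrite choose_0, !binom_0_r. unfold sum_over; simpl. lra.
    + rewrite IH, !sum_over_cons. cbn [length binom]. rewrite plus_INR. lra.
Qed.

Lemma map_nth_seq1 {A} (s : list A) d :
  map (fun c => nth (c - 1) s d) (seq 1 (length s)) = s.
Proof.
  apply nth_ext with (d := d) (d' := d); rewrite ?length_map, ?length_seq; auto.
  intros i Hi.
  rewrite (nth_indep _ d ((fun c => nth (c - 1) s d) 0%nat))
    by (rewrite length_map, length_seq; auto).
  rewrite (map_nth (fun c => nth (c - 1) s d)), seq_nth by auto. f_equal; lia.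
Qed.

Lemma mean_seq_nth {A} (s : list A) d h :
  mean (seq 1 (length s)) (fun c => h (nth (c - 1) s d)) = mean s h.
Proof. rewrite <- mean_map, map_nth_seq1. reflexivity. Qed.

Lemma mean_choose_nth {A} (l : list A) r d (h : A -> R) :
  (1 <= r <= length l)%nat ->
  mean (choose r l) (fun s => mean (seq 1 r) (fun c => h (nth (c - 1) s d))) = mean l h.
Proof.
  intros Hr. destruct l as [|x l]; [simpl in Hr; lia|]. destruct r as [|r]; [lia|].
  rewrite (mean_ext_in _ _ (fun s => / INR (S r) * sum_over s h)).
  2:{ intros s Hs. rewrite <- (in_choose_length _ _ _ Hs), mean_seq_nth.
      unfold mean, Rdiv. lra. }
  rewrite mean_scal. unfold mean. rewrite sum_choose_sum, length_choose.
  pose proof (binom_absorb (length l) r) as Hab. apply (f_equal INR) in Hab.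
  rewrite !mult_INR in Hab.
  assert (0 < binom (length l) r)%nat by (apply binom_pos; simpl in Hr; lia).
  assert (INR (binom (length l) r) <> 0) by (apply not_0_INR; lia).
  assert (INR (S r) <> 0) by (apply not_0_INR; lia).
  assert (INR (length (x :: l)) <> 0) by (apply not_0_INR; simpl; lia).
  simpl length in *.
  replace (INR (binom (S (length l)) (S r)))
    with (INR (S (length l)) * INR (binom (length l) r) / INR (S r))
    by (rewrite <- Hab; field; auto).
  field. auto.
Qed.

Definition square_sum {A} (H : A -> A -> R) (l : list A) : R :=
  sum_over l (fun a => sum_over l (H a)).
Definition diag_sum {A} (H : A -> A -> R) (l : list A) : R := sum_over l (fun a => H a a).
Fixpoint offdiag_sum {A} (H : A -> A -> R) (l : list A) : R :=
  match l with
  | [] => 0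
  | x :: l' => sum_over l' (fun b => H x b + H b x) + offdiag_sum H l'
  end.

(* Numbers of [r]-subsets of an [n]-set through one fixed element, resp. through two fixed
   elements; both are [0] when [r] or [n] is too small. *)
Definition subsets_with_elem (r n : nat) : nat :=
  match r, n with S r', S n' => binom n' r' | _, _ => 0%nat end.
Definition subsets_with_pair (r n : nat) : nat :=
  match r, n with S (S r'), S (S n') => binom n' r' | _, _ => 0%nat end.

Lemma square_sum_cons {A} (H : A -> A -> R) x l :
  square_sum H (x :: l) = H x x + sum_over l (fun b => H x b + H b x) + square_sum H l.
Proof.
  unfold square_sum. rewrite (sum_over_cons x l (fun a => sum_over (x :: l) (H a))).
  rewrite (sum_over_ext l _ (fun a => H a x + sum_over l (H a))) by (intros; apply sum_over_cons).
  rewrite sum_over_cons, !sum_over_plus. lra.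
Qed.

Lemma square_sum_split {A} (H : A -> A -> R) l :
  square_sum H l = diag_sum H l + offdiag_sum H l.
Proof.
  induction l as [|x l IH]; [unfold square_sum, diag_sum, sum_over; simpl; lra|].
  rewrite square_sum_cons, IH. unfold diag_sum. rewrite sum_over_cons. cbn [offdiag_sum]. ring.
Qed.

Lemma sum_choose_square_sum {A} (H : A -> A -> R) l r :
  sum_over (choose r l) (square_sum H)
  = INR (subsets_with_elem r (length l)) * diag_sum H l
    + INR (subsets_with_pair r (length l)) * offdiag_sum H l.
Proof.
  revert r; induction l as [|x l IH]; intros r.
  { destruct r; unfold square_sum, diag_sum, sum_over; simpl; lra. }
  destruct r as [|r].
  { rewrite choose_0. unfold square_sum, diag_sum, sum_over; simpl; lra. }
  change (choose (S r) (x :: l)) with (map (cons x) (choose r l) ++ choose (S r) l).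
  rewrite sum_over_app, sum_over_map.
  rewrite (sum_over_ext _ (fun s => square_sum H (x :: s))
    (fun s => H x x + sum_over s (fun b => H x b + H b x) + square_sum H s))
    by (intros; apply square_sum_cons).
  rewrite !sum_over_plus, sum_over_const, length_choose, !IH.
  unfold diag_sum. rewrite sum_over_cons. cbn [offdiag_sum length].
  destruct l as [|y l]; [destruct r; unfold sum_over; simpl; ring|].
  destruct r as [|r]; [rewrite choose_0|rewrite sum_choose_sum];
    destruct l as [|z l]; try destruct r as [|r];
    cbn [offdiag_sum length subsets_with_elem subsets_with_pair binom];
    rewrite ?binom_0_r, ?plus_INR; unfold sum_over; simpl; ring.
Qed.

Lemma subsets_count_identity n r : (1 <= r)%nat ->
  (S n * (subsets_with_elem r (S n) + subsets_with_pair r (S n) * n) = binom (S n) r * r * r)%nat.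
Proof.
  intros Hr. destruct r as [|r]; [lia|].
  pose proof (binom_absorb n r) as H0.
  destruct r as [|r].
  - cbn [subsets_with_elem subsets_with_pair]. rewrite binom_0_r in *. lia.
  - destruct n as [|n]; [simpl; lia|].
    pose proof (binom_absorb n r) as H1.
    cbn [subsets_with_elem subsets_with_pair] in *. nia.
Qed.

Lemma mean_choose_square_sum {A} (H : A -> A -> R) l r :
  (1 <= r <= length l)%nat -> square_sum H l = INR (length l) * diag_sum H l ->
  mean (choose r l) (square_sum H) = INR r * INR r / INR (length l) * diag_sum H l.
Proof.
  intros Hr Hsq. destruct l as [|x l]; [simpl in Hr; lia|].
  rewrite square_sum_split in Hsq. cbn [length] in *. rewrite S_INR in Hsq.
  assert (Hoff : offdiag_sum H (x :: l) = INR (length l) * diag_sum H (x :: l)) by lra.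
  unfold mean. rewrite sum_choose_square_sum, length_choose, Hoff. cbn [length].
  pose proof (subsets_count_identity (length l) r ltac:(lia)) as Hc.
  apply (f_equal INR) in Hc. rewrite !mult_INR, plus_INR, mult_INR in Hc.
  assert (0 < binom (S (length l)) r)%nat by (apply binom_pos; lia).
  assert (INR (binom (S (length l)) r) <> 0) by (apply not_0_INR; lia).
  assert (INR (S (length l)) <> 0) by (apply not_0_INR; lia).
  set (D := diag_sum H (x :: l)).
  replace (INR (subsets_with_elem r (S (length l))) * D
           + INR (subsets_with_pair r (S (length l))) * (INR (length l) * D))
    with ((INR (subsets_with_elem r (S (length l)))
           + INR (subsets_with_pair r (S (length l))) * INR (length l)) * D) by ring.
  replace (INR (subsets_with_elem r (S (length l)))
           + INR (subsets_with_pair r (S (length l))) * INR (length l))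
    with (INR (binom (S (length l)) r) * INR r * INR r / INR (S (length l)))
    by (rewrite <- Hc; field; auto).
  field; auto.
Qed.

Lemma mean_seq_nth2 {A} (H : A -> A -> R) (s : list A) d :
  mean (seq 1 (length s)) (fun a => mean (seq 1 (length s)) (fun b =>
    H (nth (a - 1) s d) (nth (b - 1) s d)))
  = square_sum H s / (INR (length s) * INR (length s)).
Proof.
  rewrite (mean_ext _ _ (fun a => mean s (H (nth (a - 1) s d))))
    by (intros a; apply (mean_seq_nth s d (H (nth (a - 1) s d)))).
  rewrite (mean_seq_nth s d (fun a => mean s (H a))).
  unfold mean at 1, square_sum.
  rewrite (sum_over_ext s _ (fun a => / INR (length s) * sum_over s (H a)))
    by (intros; unfold mean, Rdiv; lra).
  rewrite sum_over_scal. unfold Rdiv. rewrite Rinv_mult. ring.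
Qed.

Lemma length_pairs m : length (pairs m) = (m * m)%nat.
Proof.
  unfold pairs. rewrite (length_flat_map_const _ _ m), length_seq; auto.
  intros; rewrite length_map, length_seq; auto.
Qed.

Lemma sum_over_pairs m f :
  sum_over (pairs m) f = sum_over (seq 1 m) (fun a => sum_over (seq 1 m) (fun b => f (a, b))).
Proof. unfold pairs. rewrite sum_over_flat_map. apply sum_over_ext; intros; apply sum_over_map. Qed.

Lemma in_pairs m p : In p (pairs m) -> (1 <= fst p <= m)%nat /\ (1 <= snd p <= m)%nat.
Proof.
  unfold pairs. intros H. apply in_flat_map in H. destruct H as [a [Ha H]].
  apply in_map_iff in H. destruct H as [b [<- Hb]]. apply in_seq in Ha, Hb. simpl. lia.
Qed.

Lemma seq_neq_nil m : (1 <= m)%nat -> seq 1 m <> [].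
Proof. destruct m; [lia|]. simpl; congruence. Qed.

Lemma mean_pairs m f : (1 <= m)%nat ->
  mean (pairs m) f = mean (seq 1 m) (fun a => mean (seq 1 m) (fun b => f (a, b))).
Proof. intros Hm. apply mean_flat_map, seq_neq_nil, Hm. Qed.

Section CrossPairs.
Variable g : nat -> nat -> R.
Let cross (p q : nat * nat) : R := g (snd p) (fst q).

Lemma diag_sum_cross_pairs m :
  diag_sum cross (pairs m) = sum_over (seq 1 m) (fun x => sum_over (seq 1 m) (g x)).
Proof. unfold diag_sum. rewrite sum_over_pairs. apply sum_over_comm. Qed.

Lemma square_sum_cross_pairs m :
  square_sum cross (pairs m) = INR (length (pairs m)) * diag_sum cross (pairs m).
Proof.
  rewrite diag_sum_cross_pairs, length_pairs, mult_INR. unfold square_sum.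
  rewrite sum_over_pairs.
  rewrite (sum_over_ext _ _
    (fun _ => INR m * sum_over (seq 1 m) (fun x => sum_over (seq 1 m) (g x)))).
  { rewrite sum_over_const, length_seq. ring. }
  intros a. rewrite <- sum_over_scal. apply sum_over_ext. intros x.
  rewrite sum_over_pairs, <- sum_over_scal. unfold cross; simpl.
  apply sum_over_ext. intros y. rewrite sum_over_const, length_seq. reflexivity.
Qed.

(* For a uniform [r]-subset [(L_c, R_c)_c] of the grid and independent uniform positions
   [a], [b], the pair [(R_a, L_b)] is uniform on the grid, whether or not [a = b]. *)
Lemma mean_choose_cross m r d : (1 <= r <= m * m)%nat ->
  mean (choose r (pairs m)) (fun s => mean (seq 1 r) (fun a => mean (seq 1 r) (fun b =>
      g (snd (nth (a - 1) s d)) (fst (nth (b - 1) s d)))))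
  = mean (seq 1 m) (fun x => mean (seq 1 m) (g x)).
Proof.
  intros Hr.
  rewrite (mean_ext_in _ _ (fun s => / (INR r * INR r) * square_sum cross s)).
  2:{ intros s Hs. rewrite <- (in_choose_length _ _ _ Hs).
      rewrite Rmult_comm. exact (mean_seq_nth2 cross s d). }
  rewrite mean_scal, mean_choose_square_sum, diag_sum_cross_pairs, length_pairs;
    [| rewrite length_pairs; lia | apply square_sum_cross_pairs].
  assert (INR r <> 0) by (apply not_0_INR; lia).
  assert (INR m <> 0) by (apply not_0_INR; nia).
  unfold mean. rewrite length_seq.
  rewrite (sum_over_ext _ (fun x => sum_over (seq 1 m) (g x) / INR m)
    (fun x => / INR m * sum_over (seq 1 m) (g x))) by (intros; unfold Rdiv; lra).
  rewrite sum_over_scal, mult_INR. field. auto.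
Qed.
End CrossPairs.

(** * Blocks of the strings [Y] and windows of the process *)

Lemma pow2_pos n : (0 < 2 ^ n)%nat.
Proof. apply Nat.neq_0_lt_0, Nat.pow_nonzero; lia. Qed.

Lemma Ystr_S ss q c : Ystr ss (S q) c =
  Ystr ss q (fst (nth (c - 1) (nth q ss []) (0%nat, 0%nat))) ++
  Ystr ss q (snd (nth (c - 1) (nth q ss []) (0%nat, 0%nat))).
Proof. simpl. destruct (nth (c - 1) (nth q ss []) (0%nat, 0%nat)); reflexivity. Qed.

Lemma length_Ystr ss q c : length (Ystr ss q c) = (2 ^ q)%nat.
Proof.
  revert c; induction q; intros c; [reflexivity|]. rewrite Ystr_S, length_app, !IHq. simpl; lia.
Qed.

Lemma Ystr_firstn ss M q c : (q <= M)%nat -> Ystr (firstn M ss) q c = Ystr ss q c.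
Proof.
  revert c; induction q; intros c Hq; [reflexivity|]. rewrite !Ystr_S, nth_firstn.
  replace (q <? M)%nat with true by (symmetry; apply Nat.ltb_lt; lia).
  rewrite !IHq by lia. reflexivity.
Qed.

Definition block (n t : nat) (w : list nat) : list nat := firstn (2 ^ n) (skipn (t * 2 ^ n) w).

Lemma block_app_l n d t u v : length u = (2 ^ (n + d))%nat -> (t < 2 ^ d)%nat ->
  block n t (u ++ v) = block n t u.
Proof.
  intros Hu Ht. unfold block. rewrite skipn_app, firstn_app, length_skipn, Hu, Nat.pow_add_r.
  replace (2 ^ n - (2 ^ n * 2 ^ d - t * 2 ^ n))%nat with 0%nat by nia.
  rewrite app_nil_r. reflexivity.
Qed.

Lemma block_app_r n d t u v : length u = (2 ^ (n + d))%nat -> (2 ^ d <= t)%nat ->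
  block n t (u ++ v) = block n (t - 2 ^ d) v.
Proof.
  intros Hu Ht. unfold block. rewrite Nat.pow_add_r in Hu.
  rewrite skipn_app, skipn_all2 by nia.
  rewrite Hu, Nat.mul_sub_distr_r, (Nat.mul_comm (2 ^ n)). reflexivity.
Qed.

Lemma block_full n w : length w = (2 ^ n)%nat -> block n 0 w = w.
Proof. intros H. unfold block. simpl. rewrite <- H. apply firstn_all. Qed.

Definition level_string (w : list (list (nat * nat)) * list nat) (q : nat) : list nat :=
  Ystr (fst w) q (nth q (snd w) 0%nat).

Lemma length_level_strings w q : length (flat_map (level_string w) (seq 0 q)) = (2 ^ q - 1)%nat.
Proof.
  induction q; [reflexivity|]. rewrite seq_S, flat_map_app, length_app, IHq. simpl.
  rewrite app_nil_r. unfold level_string. rewrite length_Ystr. pose proof (pow2_pos q). lia.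
Qed.

Lemma prefix_split N w q : (q <= N)%nat ->
  prefix N w = flat_map (level_string w) (seq 0 q) ++ level_string w q
               ++ flat_map (level_string w) (seq (S q) (N - q)).
Proof.
  intros Hq. unfold prefix. replace (S N) with (q + S (N - q))%nat by lia.
  rewrite seq_app, flat_map_app. reflexivity.
Qed.

Lemma firstn_skipn_app_middle (u y v : list nat) a b : (b + a <= length y)%nat ->
  firstn a (skipn (length u + b) (u ++ y ++ v)) = firstn a (skipn b y).
Proof.
  intros H. rewrite skipn_app, skipn_all2 by lia. simpl.
  replace (length u + b - length u)%nat with b by lia.
  rewrite skipn_app. replace (b - length y)%nat with 0%nat by lia. simpl.
  rewrite firstn_app, length_skipn. replace (a - (length y - b))%nat with 0%nat by lia.
  simpl. rewrite app_nil_r. reflexivity.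
Qed.

Lemma window_aligned N w n j : (1 <= j)%nat -> (n + Nat.log2 j <= N)%nat ->
  window N w (j * 2 ^ n) (2 ^ n)
  = block n (j - 2 ^ Nat.log2 j) (level_string w (n + Nat.log2 j)).
Proof.
  intros Hj HN. set (e := Nat.log2 j) in *. pose proof (Nat.log2_spec j Hj) as He. fold e in He.
  pose proof (pow2_pos n). simpl in He.
  unfold window, block. rewrite (prefix_split N w (n + e)) by lia.
  replace (j * 2 ^ n - 1)%nat
    with (length (flat_map (level_string w) (seq 0 (n + e))) + (j - 2 ^ e) * 2 ^ n)%nat.
  - apply firstn_skipn_app_middle. unfold level_string. rewrite length_Ystr, Nat.pow_add_r. nia.
  - rewrite length_level_strings, Nat.pow_add_r, Nat.mul_sub_distr_r. nia.
Qed.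

Lemma firstn_add {A} (l : list A) a b : firstn (a + b) l = firstn a l ++ firstn b (skipn a l).
Proof.
  revert l; induction a; intros l; [reflexivity|].
  destruct l; simpl; [destruct b; reflexivity | f_equal; apply IHa].
Qed.

Lemma window_double N w n j : (1 <= j)%nat ->
  window N w (j * 2 ^ n) (2 ^ S n)
  = window N w (j * 2 ^ n) (2 ^ n) ++ window N w (S j * 2 ^ n) (2 ^ n).
Proof.
  intros Hj. unfold window. pose proof (pow2_pos n). simpl Nat.pow at 1. rewrite Nat.add_0_r.
  rewrite firstn_add, skipn_skipn.
  replace (S j * 2 ^ n - 1)%nat with (2 ^ n + (j * 2 ^ n - 1))%nat by nia. reflexivity.
Qed.

Lemma sum_over_indicator {A} (dec : forall x y : A, {x = y} + {x <> y}) l a f :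
  NoDup l -> In a l -> sum_over l (fun c => (if dec a c then 1 else 0) * f c) = f a.
Proof.
  induction l as [|x l IH]; intros Hnd Hin; [destruct Hin|].
  inversion Hnd as [|? ? Hx Hnd']; subst. rewrite sum_over_cons.
  destruct (dec a x) as [<-|Hne].
  - rewrite (sum_over_ext_in l _ (fun _ => 0)), sum_over_const; [lra|].
    intros c Hc. destruct (dec a c); [subst; contradiction|lra].
  - rewrite IH; [lra|auto|]. destruct Hin; [congruence|auto].
Qed.

Lemma words_length k0 m x : In x (words k0 m) -> length x = m.
Proof.
  revert x; induction m; intros x H; simpl in H.
  - destruct H as [<-|[]]; reflexivity.
  - apply in_flat_map in H. destruct H as [u [H1 H2]]. apply in_map_iff in H2.
    destruct H2 as [c [<- _]]. rewrite length_app, IHm by auto. simpl; lia.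
Qed.

Lemma sum_over_words_indicator k0 w psi :
  over_alphabet k0 w ->
  sum_over (words k0 (length w)) (fun x => (if list_eq_dec Nat.eq_dec w x then 1 else 0) * psi x)
  = psi w.
Proof.
  revert psi; induction w as [|c w IH] using rev_ind; intros psi Hw.
  { unfold sum_over; simpl. destruct (list_eq_dec Nat.eq_dec [] []); [lra|congruence]. }
  apply Forall_app in Hw. destruct Hw as [Hw Hc]. inversion Hc; subst.
  rewrite length_app, Nat.add_1_r. simpl words. rewrite sum_over_flat_map.
  rewrite (sum_over_ext _ _ (fun u => (if list_eq_dec Nat.eq_dec w u then 1 else 0) *
     sum_over (seq 1 k0) (fun b => (if Nat.eq_dec c b then 1 else 0) * psi (u ++ [b])))).
  { rewrite (IH (fun u =>
      sum_over (seq 1 k0) (fun b => (if Nat.eq_dec c b then 1 else 0) * psi (u ++ [b])))) by auto.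
    apply (sum_over_indicator Nat.eq_dec _ _ (fun b => psi (w ++ [b]))).
    - apply seq_NoDup.
    - apply in_seq; lia. }
  intros u. rewrite sum_over_map. destruct (list_eq_dec Nat.eq_dec w u) as [<-|Hne].
  - rewrite Rmult_1_l. apply sum_over_ext. intros b.
    destruct (list_eq_dec Nat.eq_dec (w ++ [c]) (w ++ [b])) as [E|E], (Nat.eq_dec c b);
      subst; try reflexivity.
    + apply app_inj_tail in E. destruct E; congruence.
    + congruence.
  - rewrite Rmult_0_l, (sum_over_ext _ _ (fun _ => 0)), sum_over_const; [lra|].
    intros b. destruct (list_eq_dec Nat.eq_dec (w ++ [c]) (u ++ [b])) as [E|E]; [|lra].
    apply app_inj_tail in E. destruct E; congruence.
Qed.

Lemma substring_firstn_skipn (l : list nat) a b : substring (firstn a (skipn b l)) l.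
Proof.
  exists (firstn b l), (skipn a (skipn b l)). rewrite !firstn_skipn. reflexivity.
Qed.

Lemma window_substring N w a len a' len' :
  (1 <= a <= a')%nat -> (a' + len' <= a + len)%nat ->
  substring (window N w a' len') (window N w a len).
Proof.
  intros H1 H2. unfold window.
  replace (firstn len' (skipn (a' - 1) (prefix N w)))
    with (firstn len' (skipn (a' - a) (firstn len (skipn (a - 1) (prefix N w))))).
  - apply substring_firstn_skipn.
  - rewrite skipn_firstn_comm, firstn_firstn, skipn_skipn.
    replace (a' - a + (a - 1))%nat with (a' - 1)%nat by lia. f_equal. lia.
Qed.

Lemma length_window N w a len : (a - 1 + len <= 2 ^ S N - 1)%nat -> length (window N w a len) = len.
Proof.
  intros H. unfold window. rewrite length_firstn, length_skipn.
  unfold prefix. fold (level_string w). rewrite length_level_strings. lia.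
Qed.

(** * Averaging over the random hierarchy *)

Section RHA.
Variable k : nat -> nat.
Hypothesis hk_pos : forall n, (1 <= k n)%nat.
Hypothesis hk_grow : forall n, (1 <= n)%nat -> (k (n - 1) <= k n <= k (n - 1) * k (n - 1))%nat.

Lemma k_S_bounds m : (1 <= k (S m) <= length (pairs (k m)))%nat.
Proof.
  rewrite length_pairs. pose proof (hk_grow (S m) ltac:(lia)) as H.
  replace (S m - 1)%nat with m in H by lia. pose proof (hk_pos (S m)). lia.
Qed.

Lemma levels_length N ss : In ss (levels k N) -> length ss = N.
Proof.
  revert ss; induction N; intros ss H; simpl in H.
  - destruct H as [<-|[]]; reflexivity.
  - apply in_flat_map in H. destruct H as [ss' [H1 H2]]. apply in_map_iff in H2.
    destruct H2 as [s [<- _]]. rewrite length_app, IHN by auto. simpl; lia.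
Qed.

Lemma mean_levels_S m F :
  mean (levels k (S m)) F =
  mean (levels k m) (fun ss => mean (choose (k (S m)) (pairs (k m))) (fun s => F (ss ++ [s]))).
Proof. apply mean_flat_map, choose_neq_nil. pose proof (k_S_bounds m). lia. Qed.

Lemma mean_levels_firstn M N F : (M <= N)%nat ->
  mean (levels k N) (fun ss => F (firstn M ss)) = mean (levels k M) F.
Proof.
  intros HMN. induction N.
  - replace M with 0%nat by lia. apply mean_ext_in. intros ss Hs.
    apply levels_length in Hs. destruct ss; [reflexivity|discriminate].
  - destruct (Nat.eq_dec M (S N)) as [->|HM].
    { apply mean_ext_in. intros ss Hs. apply levels_length in Hs. rewrite <- Hs, firstn_all. auto. }
    rewrite mean_levels_S, <- IHN by lia. apply mean_ext_in. intros ss Hs.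
    apply levels_length in Hs. apply mean_const_in.
    + apply choose_neq_nil. pose proof (k_S_bounds N); lia.
    + intros s _. rewrite firstn_app. replace (M - length ss)%nat with 0%nat by lia.
      rewrite app_nil_r. reflexivity.
Qed.

Lemma mean_levels_trunc q N (F : list (list (nat * nat)) -> R) :
  (q <= N)%nat -> (forall ss, F ss = F (firstn q ss)) ->
  mean (levels k N) F = mean (levels k q) F.
Proof. intros Hq HF. rewrite <- (mean_levels_firstn q N F Hq). apply mean_ext; auto. Qed.

Section TopLevel.
Variables (m : nat) (G : list (list (nat * nat)) -> nat -> nat -> R).
Hypothesis G_trunc : forall ss a b, G ss a b = G (firstn m ss) a b.

Let mean_lower := mean (levels k m) (fun ss => mean (seq 1 (k m)) (fun a =>
  mean (seq 1 (k m)) (fun b => G ss a b))).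

Lemma mean_top_pair :
  mean (levels k (S m)) (fun ss => mean (seq 1 (k (S m))) (fun c =>
     G ss (fst (nth (c - 1) (nth m ss []) (0%nat, 0%nat)))
          (snd (nth (c - 1) (nth m ss []) (0%nat, 0%nat)))))
  = mean_lower.
Proof.
  rewrite mean_levels_S. apply mean_ext_in. intros ss Hs. apply levels_length in Hs.
  rewrite (mean_ext _ _ (fun s => mean (seq 1 (k (S m))) (fun c =>
     (fun p => G ss (fst p) (snd p)) (nth (c - 1) s (0%nat, 0%nat))))).
  2:{ intros s. apply mean_ext. intros c.
      rewrite G_trunc, firstn_app, <- Hs, firstn_all, Nat.sub_diag, app_nil_r, nth_middle.
      reflexivity. }
  rewrite (mean_choose_nth (pairs (k m)) (k (S m)) _ (fun p => G ss (fst p) (snd p)))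
    by apply k_S_bounds.
  apply mean_pairs, hk_pos.
Qed.

Lemma mean_top_cross :
  mean (levels k (S m)) (fun ss => mean (seq 1 (k (S m))) (fun a =>
    mean (seq 1 (k (S m))) (fun b =>
     G ss (snd (nth (a - 1) (nth m ss []) (0%nat, 0%nat)))
          (fst (nth (b - 1) (nth m ss []) (0%nat, 0%nat))))))
  = mean_lower.
Proof.
  rewrite mean_levels_S. apply mean_ext_in. intros ss Hs. apply levels_length in Hs.
  rewrite (mean_ext _ _ (fun s => mean (seq 1 (k (S m))) (fun a => mean (seq 1 (k (S m)))
     (fun b => G ss (snd (nth (a - 1) s (0%nat, 0%nat))) (fst (nth (b - 1) s (0%nat, 0%nat))))))).
  2:{ intros s. apply mean_ext. intros a. apply mean_ext. intros b.
      rewrite G_trunc, firstn_app, <- Hs, firstn_all, Nat.sub_diag, app_nil_r, nth_middle.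
      reflexivity. }
  pose proof (k_S_bounds m) as HkS. rewrite length_pairs in HkS.
  apply mean_choose_cross. lia.
Qed.
End TopLevel.

(* [mean_Y n f] is [E f(Y^n_c)] for [c] uniform on [{1..k_n}] and independent of the levels. *)
Definition mean_Y (n : nat) (f : list nat -> R) : R :=
  mean (levels k n) (fun ss => mean (seq 1 (k n)) (fun c => f (Ystr ss n c))).

Definition mean_Y2 (n : nat) (f : list nat -> list nat -> R) : R :=
  mean (levels k n) (fun ss => mean (seq 1 (k n)) (fun a => mean (seq 1 (k n)) (fun b =>
    f (Ystr ss n a) (Ystr ss n b)))).

Lemma mean_Y2_fst n f : mean_Y2 n (fun u _ => f u) = mean_Y n f.
Proof.
  apply mean_ext; intros ss. apply mean_ext; intros a.
  apply mean_const, seq_neq_nil, hk_pos.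
Qed.

Lemma mean_Y2_snd n f : mean_Y2 n (fun _ v => f v) = mean_Y n f.
Proof. apply mean_ext; intros ss. apply mean_const, seq_neq_nil, hk_pos. Qed.

Lemma mean_Y_S m f : mean_Y (S m) f = mean_Y2 m (fun u v => f (u ++ v)).
Proof.
  unfold mean_Y, mean_Y2.
  rewrite <- (mean_top_pair m (fun ss a b => f (Ystr ss m a ++ Ystr ss m b))).
  - apply mean_ext; intros ss; apply mean_ext; intros c. rewrite Ystr_S. reflexivity.
  - intros; rewrite !Ystr_firstn; auto.
Qed.

Lemma mean_Y_block n f d t : (t < 2 ^ d)%nat ->
  mean_Y (n + d) (fun w => f (block n t w)) = mean_Y n f.
Proof.
  revert t; induction d; intros t Ht.
  - rewrite Nat.add_0_r. simpl in Ht. replace t with 0%nat by lia.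
    apply mean_ext; intros ss; apply mean_ext; intros c. rewrite block_full; auto.
    apply length_Ystr.
  - rewrite Nat.add_succ_r, mean_Y_S. destruct (Nat.lt_ge_cases t (2 ^ d)) as [Hl|Hr].
    + rewrite <- (IHd t Hl), <- mean_Y2_fst. apply mean_ext; intros ss.
      do 2 (apply mean_ext; intros).
      rewrite (block_app_l n d); auto. apply length_Ystr.
    + rewrite <- (IHd (t - 2 ^ d)%nat) by (simpl in Ht; lia). rewrite <- mean_Y2_snd.
      apply mean_ext; intros ss. do 2 (apply mean_ext; intros).
      rewrite (block_app_r n d); auto. apply length_Ystr.
Qed.

Lemma mean_Y2_straddle n f d :
  mean_Y2 (n + d) (fun u v => f (block n (2 ^ d - 1) u ++ block n 0 v))
  = mean_Y2 n (fun u v => f (u ++ v)).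
Proof.
  induction d.
  - rewrite Nat.add_0_r. apply mean_ext; intros ss. do 2 (apply mean_ext; intros).
    rewrite !block_full by apply length_Ystr. reflexivity.
  - rewrite <- IHd, Nat.add_succ_r. unfold mean_Y2 at 2.
    rewrite <- (mean_top_cross (n + d) (fun ss u v =>
       f (block n (2 ^ d - 1) (Ystr ss (n + d) u) ++ block n 0 (Ystr ss (n + d) v)))).
    + apply mean_ext; intros ss. do 2 (apply mean_ext; intros). rewrite !Ystr_S.
      pose proof (pow2_pos d).
      rewrite (block_app_r n d), (block_app_l n d) by (apply length_Ystr || simpl; lia).
      do 3 f_equal. simpl. lia.
    + intros; rewrite !Ystr_firstn; auto.
Qed.

Lemma mean_Y_adjacent_blocks n f d t : (S t < 2 ^ d)%nat ->
  mean_Y (n + d) (fun w => f (block n t w ++ block n (S t) w)) = mean_Y2 n (fun u v => f (u ++ v)).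
Proof.
  revert t; induction d; intros t Ht; [simpl in Ht; lia|].
  rewrite Nat.add_succ_r, mean_Y_S. pose proof (pow2_pos d) as Hd.
  assert (Hd2 : (2 ^ S d = 2 * 2 ^ d)%nat) by reflexivity.
  destruct (Nat.lt_ge_cases (S t) (2 ^ d)) as [Hl|Hr].
  - rewrite <- (IHd t Hl), <- mean_Y2_fst. apply mean_ext; intros ss.
    do 2 (apply mean_ext; intros).
    rewrite !(block_app_l n d) by (apply length_Ystr || lia). reflexivity.
  - destruct (Nat.eq_dec t (2 ^ d - 1)) as [->|Ht1].
    + rewrite <- (mean_Y2_straddle n f d). apply mean_ext; intros ss. do 2 (apply mean_ext; intros).
      rewrite (block_app_l n d), (block_app_r n d (S _)) by (apply length_Ystr || lia).
      replace (S (2 ^ d - 1) - 2 ^ d)%nat with 0%nat by lia. reflexivity.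
    + rewrite <- (IHd (t - 2 ^ d)%nat) by lia. rewrite <- mean_Y2_snd.
      apply mean_ext; intros ss. do 2 (apply mean_ext; intros).
      rewrite !(block_app_r n d) by (apply length_Ystr || lia).
      replace (S t - 2 ^ d)%nat with (S (t - 2 ^ d)) by lia. reflexivity.
Qed.

Lemma mean_Y_left_child m f :
  mean (levels k (S m)) (fun ss => mean (seq 1 (k m)) (fun a => mean (seq 1 (k (S m))) (fun b =>
    f (Ystr ss m a) (Ystr ss m (fst (nth (b - 1) (nth m ss []) (0%nat, 0%nat)))))))
  = mean_Y2 m f.
Proof.
  set (G := fun ss x (_ : nat) => mean (seq 1 (k m)) (fun a => f (Ystr ss m a) (Ystr ss m x))).
  rewrite (mean_ext (levels k (S m)) _ (fun ss => mean (seq 1 (k (S m))) (fun b =>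
    G ss (fst (nth (b - 1) (nth m ss []) (0%nat, 0%nat)))
      (snd (nth (b - 1) (nth m ss []) (0%nat, 0%nat))))))
    by (intros; apply mean_comm).
  rewrite (mean_top_pair m G)
    by (intros; apply mean_ext; intros; unfold G; rewrite !Ystr_firstn; auto).
  apply mean_ext; intros ss.
  rewrite (mean_ext _ _ (fun x => mean (seq 1 (k m)) (fun a => f (Ystr ss m a) (Ystr ss m x))))
    by (intros; unfold G; apply mean_const, seq_neq_nil, hk_pos).
  apply mean_comm.
Qed.

Lemma cvals_length N cs : In cs (cvals k N) -> length cs = S N.
Proof.
  revert cs; induction N; intros cs H; simpl in H.
  - apply in_map_iff in H. destruct H as [c [<- _]]. reflexivity.
  - apply in_flat_map in H. destruct H as [cs' [H1 H2]]. apply in_map_iff in H2.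
    destruct H2 as [c [<- _]]. rewrite length_app, IHN by auto. simpl; lia.
Qed.

Lemma cvals_neq_nil N : cvals k N <> [].
Proof.
  induction N; simpl.
  - pose proof (seq_neq_nil _ (hk_pos 0)). destruct (seq 1 (k 0%nat)); simpl; congruence.
  - destruct (cvals k N) as [|cs l]; [congruence|]. simpl.
    pose proof (seq_neq_nil _ (hk_pos (S N))). destruct (seq 1 (k (S N))); simpl; congruence.
Qed.

Lemma mean_cvals_S N F :
  mean (cvals k (S N)) F
  = mean (cvals k N) (fun cs => mean (seq 1 (k (S N))) (fun c => F (cs ++ [c]))).
Proof. apply mean_flat_map, seq_neq_nil, hk_pos. Qed.

Lemma mean_cvals_nth q N f : (q <= N)%nat ->
  mean (cvals k N) (fun cs => f (nth q cs 0%nat)) = mean (seq 1 (k q)) f.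
Proof.
  induction N; intros Hq.
  - replace q with 0%nat by lia. simpl cvals. rewrite mean_map. reflexivity.
  - rewrite mean_cvals_S. destruct (Nat.eq_dec q (S N)) as [->|Hne].
    + apply mean_const_in; [apply cvals_neq_nil|]. intros cs Hcs. apply cvals_length in Hcs.
      apply mean_ext; intros c. rewrite <- Hcs, nth_middle. reflexivity.
    + rewrite <- IHN by lia. apply mean_ext_in. intros cs Hcs. apply cvals_length in Hcs.
      apply mean_const_in; [apply seq_neq_nil, hk_pos|]. intros c _.
      rewrite app_nth1 by lia. reflexivity.
Qed.

Lemma mean_cvals_nth2 q N f : (S q <= N)%nat ->
  mean (cvals k N) (fun cs => f (nth q cs 0%nat) (nth (S q) cs 0%nat))
  = mean (seq 1 (k q)) (fun a => mean (seq 1 (k (S q))) (f a)).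
Proof.
  induction N; intros Hq; [lia|].
  rewrite mean_cvals_S. destruct (Nat.eq_dec q N) as [->|Hne].
  - rewrite <- (mean_cvals_nth N N (fun a => mean (seq 1 (k (S N))) (f a))) by lia.
    apply mean_ext_in. intros cs Hcs. apply cvals_length in Hcs.
    apply mean_ext; intros c. rewrite app_nth1, <- Hcs, nth_middle by lia. reflexivity.
  - rewrite <- IHN by lia. apply mean_ext_in. intros cs Hcs. apply cvals_length in Hcs.
    apply mean_const_in; [apply seq_neq_nil, hk_pos|]. intros c _.
    rewrite !app_nth1 by lia. reflexivity.
Qed.

Lemma mean_Omega_level N q (f : list nat -> R) : (q <= N)%nat ->
  mean (Omega k N) (fun w => f (level_string w q)) = mean_Y q f.
Proof.
  intros Hq. unfold Omega. rewrite mean_list_prod by apply cvals_neq_nil.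
  unfold level_string; cbn [fst snd].
  rewrite (mean_ext _ _ (fun ss => mean (seq 1 (k q)) (fun c => f (Ystr ss q c))))
    by (intros ss; apply (mean_cvals_nth q N (fun c => f (Ystr ss q c))); auto).
  apply mean_levels_trunc; auto. intros; apply mean_ext; intros; rewrite Ystr_firstn; auto.
Qed.

Lemma mean_window_aligned N n j g : (1 <= j)%nat -> (n + Nat.log2 j <= N)%nat ->
  mean (Omega k N) (fun w => g (window N w (j * 2 ^ n) (2 ^ n))) = mean_Y n g.
Proof.
  intros Hj HN. pose proof (Nat.log2_spec j Hj) as He. simpl in He.
  rewrite (mean_ext _ _
    (fun w => g (block n (j - 2 ^ Nat.log2 j) (level_string w (n + Nat.log2 j)))))
    by (intros; rewrite window_aligned; auto).
  rewrite (mean_Omega_level N _ (fun u => g (block n (j - 2 ^ Nat.log2 j) u))) by auto.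
  apply mean_Y_block. lia.
Qed.

Lemma mean_Omega_level2 N q (f : list nat -> list nat -> R) : (S q <= N)%nat ->
  mean (Omega k N) (fun w => f (level_string w q) (level_string w (S q)))
  = mean (levels k (S q)) (fun ss => mean (seq 1 (k q)) (fun a => mean (seq 1 (k (S q))) (fun b =>
      f (Ystr ss q a) (Ystr ss (S q) b)))).
Proof.
  intros Hq. unfold Omega. rewrite mean_list_prod by apply cvals_neq_nil.
  unfold level_string; cbn [fst snd].
  rewrite (mean_ext _ _ (fun ss => mean (seq 1 (k q)) (fun a => mean (seq 1 (k (S q))) (fun b =>
      f (Ystr ss q a) (Ystr ss (S q) b)))))
    by (intros ss;
        apply (mean_cvals_nth2 q N (fun a b => f (Ystr ss q a) (Ystr ss (S q) b))); auto).
  apply mean_levels_trunc; auto.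
  intros; do 2 (apply mean_ext; intros); rewrite !Ystr_firstn; auto.
Qed.

(* [X_(j 2^n : (j+2) 2^n - 1)] is two consecutive aligned blocks: either both inside one
   level string, or the last block of one level string followed by the first of the next. *)
Lemma mean_window_aligned_double N n j g : (1 <= j)%nat -> (n + Nat.log2 j + 1 <= N)%nat ->
  mean (Omega k N) (fun w => g (window N w (j * 2 ^ n) (2 ^ S n)))
  = mean_Y2 n (fun u v => g (u ++ v)).
Proof.
  intros Hj HN. pose proof (Nat.log2_spec j Hj) as He.
  set (e := Nat.log2 j) in *. set (t := (j - 2 ^ e)%nat). simpl in He.
  rewrite (mean_ext _ _
    (fun w => g (window N w (j * 2 ^ n) (2 ^ n) ++ window N w (S j * 2 ^ n) (2 ^ n))))
    by (intros; rewrite window_double; auto).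
  destruct (Nat.lt_ge_cases (S j) (2 ^ S e)) as [Hin|Hout].
  - assert (HlS : Nat.log2 (S j) = e) by (apply Nat.log2_unique; simpl in *; lia).
    rewrite (mean_ext _ _ (fun w => g (block n t (level_string w (n + e))
                                       ++ block n (S t) (level_string w (n + e))))).
    2:{ intros w. rewrite !window_aligned by lia. rewrite HlS.
        unfold t. replace (S j - 2 ^ e)%nat with (S (j - 2 ^ e)) by lia. reflexivity. }
    rewrite (mean_Omega_level N (n + e) (fun u => g (block n t u ++ block n (S t) u))) by lia.
    apply mean_Y_adjacent_blocks. simpl in Hin. lia.
  - assert (Hpow : S j = (2 ^ S e)%nat) by (simpl in *; lia).
    assert (HlS : Nat.log2 (S j) = S e) by (rewrite Hpow; apply Nat.log2_pow2; lia).
    assert (Ht : t = (2 ^ e - 1)%nat) by (simpl in Hpow; unfold t; lia).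
    rewrite (mean_ext _ _ (fun w => g (block n t (level_string w (n + e))
                                       ++ block n 0 (level_string w (S (n + e)))))).
    2:{ intros w. rewrite !window_aligned by lia. rewrite HlS, Hpow, Nat.sub_diag, Nat.add_succ_r.
        reflexivity. }
    rewrite (mean_Omega_level2 N (n + e) (fun u v => g (block n t u ++ block n 0 v))) by lia.
    rewrite <- (mean_Y2_straddle n g e), <- Ht.
    rewrite <- (mean_Y_left_child (n + e) (fun u v => g (block n t u ++ block n 0 v))).
    apply mean_ext; intros ss. do 2 (apply mean_ext; intros).
    rewrite Ystr_S, (block_app_l n e) by (apply length_Ystr || apply pow2_pos). reflexivity.
Qed.

Lemma levels_nth N ss q : In ss (levels k N) -> (q < N)%nat ->
  In (nth q ss []) (choose (k (S q)) (pairs (k q))).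
Proof.
  revert ss; induction N; intros ss H Hq; [lia|]. simpl in H.
  apply in_flat_map in H. destruct H as [ss' [H1 H2]]. apply in_map_iff in H2.
  destruct H2 as [s [<- Hs]]. pose proof (levels_length _ _ H1) as Hl.
  destruct (Nat.eq_dec q N) as [->|Hne].
  - rewrite <- Hl, nth_middle, Hl. auto.
  - rewrite app_nth1 by lia. apply IHN; auto; lia.
Qed.

Lemma Ystr_over_alphabet N ss q c : In ss (levels k N) -> (q <= N)%nat ->
  (1 <= c <= k q)%nat -> over_alphabet (k 0%nat) (Ystr ss q c).
Proof.
  intros Hss. revert c; induction q; intros c Hq Hc; [constructor; auto|].
  rewrite Ystr_S. pose proof (levels_nth N ss q Hss ltac:(lia)) as Hs.
  assert (Hp : In (nth (c - 1) (nth q ss []) (0%nat, 0%nat)) (nth q ss []))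
    by (apply nth_In; rewrite (in_choose_length _ _ _ Hs); lia).
  apply (in_choose_incl _ _ _ _ Hs), in_pairs in Hp.
  apply Forall_app; split; apply IHq; lia.
Qed.

Lemma cvals_nth_range N cs q : In cs (cvals k N) -> (q <= N)%nat -> (1 <= nth q cs 0 <= k q)%nat.
Proof.
  revert cs; induction N; intros cs H Hq; simpl in H.
  - apply in_map_iff in H. destruct H as [c [<- Hc]]. apply in_seq in Hc.
    replace q with 0%nat by lia. simpl. lia.
  - apply in_flat_map in H. destruct H as [cs' [H1 H2]]. apply in_map_iff in H2.
    destruct H2 as [c [<- Hc]]. apply in_seq in Hc. pose proof (cvals_length _ _ H1) as Hl.
    destruct (Nat.eq_dec q (S N)) as [->|Hne].
    + replace (nth (S N) (cs' ++ [c]) 0%nat) with c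
        by (rewrite <- Hl, nth_middle; reflexivity). lia.
    + rewrite app_nth1 by lia. apply IHN; auto; lia.
Qed.

Lemma window_over_alphabet N w a len : In w (Omega k N) ->
  over_alphabet (k 0%nat) (window N w a len).
Proof.
  intros Hw. destruct w as [ss cs]. apply in_prod_iff in Hw. destruct Hw as [Hss Hcs].
  assert (Hpre : over_alphabet (k 0%nat) (prefix N (ss, cs))).
  { apply Forall_forall. intros x Hx.
    apply in_flat_map in Hx. destruct Hx as [q [Hq Hx]]. apply in_seq in Hq.
    assert (HY := Ystr_over_alphabet N ss q (nth q cs 0%nat) Hss ltac:(lia)
                    (cvals_nth_range N cs q Hcs ltac:(lia))).
    unfold over_alphabet in HY. rewrite Forall_forall in HY. apply HY, Hx. }
  unfold window. rewrite <- (firstn_skipn (a - 1)), <- (firstn_skipn len (skipn _ _)) in Hpre.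
  apply Forall_app in Hpre. destruct Hpre as [_ Hpre]. apply Forall_app in Hpre. tauto.
Qed.

Lemma EX_mean a len g :
  EX k a len g = mean (Omega k (a + len)) (fun w => g (window (a + len) w a len)).
Proof. reflexivity. Qed.

Section IncreasingStatistic.
Variable phi : list nat -> R.
Hypothesis hphi : str_increasing (k 0%nat) phi.

Lemma EX_aligned m j : (1 <= j)%nat -> EX k (j * 2 ^ m) (2 ^ m) phi = mean_Y m phi.
Proof.
  intros Hj. rewrite EX_mean. apply mean_window_aligned; auto.
  pose proof (Nat.log2_le_lin j ltac:(lia)). pose proof (Nat.pow_gt_lin_r 2 m ltac:(lia)).
  pose proof (pow2_pos m). nia.
Qed.

(* Every window of length [2^(m+1)] contains an aligned block of length [2^m]. *)
Lemma EX_lower m i : (1 <= i)%nat -> mean_Y m phi <= EX k i (2 ^ S m) phi.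
Proof.
  intros Hi. set (d := (2 ^ m)%nat). pose proof (pow2_pos m) as Hd.
  set (j := ((i + d - 1) / d)%nat).
  pose proof (Nat.div_mod (i + d - 1) d ltac:(lia)) as Hdm. fold j in Hdm.
  pose proof (Nat.mod_upper_bound (i + d - 1) d ltac:(lia)).
  assert (Hj : (1 <= j)%nat) by nia.
  rewrite EX_mean, <- (mean_window_aligned (i + 2 ^ S m) m j phi Hj).
  - apply mean_le. intros w Hw. apply hphi; [apply window_over_alphabet; auto|].
    apply window_substring; simpl; fold d; nia.
  - pose proof (Nat.log2_le_lin j ltac:(lia)).
    pose proof (Nat.pow_gt_lin_r 2 m ltac:(lia)) as Hm. fold d in Hm. simpl. nia.
Qed.

(* Every window of length [2^n] starting at [i >= 2^n] lies in an aligned window of length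
   [2^(n+1)]. *)
Lemma EX_upper n i : (2 ^ n <= i)%nat -> EX k i (2 ^ n) phi <= mean_Y (S n) phi.
Proof.
  intros Hi. set (L := (2 ^ n)%nat) in *. pose proof (pow2_pos n) as HL.
  set (t := (i / L)%nat).
  pose proof (Nat.div_mod i L ltac:(lia)) as Hdm. fold t in Hdm.
  pose proof (Nat.mod_upper_bound i L ltac:(lia)).
  assert (Ht : (1 <= t)%nat) by nia.
  rewrite mean_Y_S, EX_mean.
  rewrite <- (mean_window_aligned_double (i + L) n t phi Ht).
  - apply mean_le. intros w Hw. apply hphi; [apply window_over_alphabet; auto|].
    apply window_substring; simpl; fold L; nia.
  - pose proof (Nat.log2_le_lin t ltac:(lia)).
    pose proof (Nat.pow_gt_lin_r 2 n ltac:(lia)) as Hn. fold L in Hn. nia.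
Qed.

Lemma sum_words_Pwin L i :
  sum_over (words (k 0%nat) L) (fun x => Pwin k i x * phi x) = EX k i L phi.
Proof.
  rewrite (sum_over_ext_in _ _ (fun x => mean (Omega k (i + L)) (fun w =>
     (if list_eq_dec Nat.eq_dec (window (i + L) w i L) x then 1 else 0) * phi x))).
  2:{ intros x Hx. unfold Pwin. rewrite EX_mean, (words_length _ _ _ Hx), Rmult_comm, <- mean_scal.
      apply mean_ext; intros; lra. }
  rewrite <- mean_sum_over, EX_mean. apply mean_ext_in. intros w Hw.
  rewrite <- (length_window (i + L) w i L) at 1.
  - apply sum_over_words_indicator, window_over_alphabet; auto.
  - pose proof (Nat.pow_gt_lin_r 2 (i + L) ltac:(lia)). simpl. lia.
Qed.

Lemma sum_words_cesaro L N :
  sum_over (words (k 0%nat) L) (fun x => cesaro k x N * phi x)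
  = sum_over (seq 1 (S N)) (fun i => EX k i L phi) / INR (S N).
Proof.
  unfold cesaro, Rdiv.
  rewrite (sum_over_ext _ _
    (fun x => / INR (S N) * sum_over (seq 1 (S N)) (fun i => Pwin k i x * phi x))).
  2:{ intros x. fold (sum_over (seq 1 (S N)) (fun i => Pwin k i x)).
      rewrite (sum_over_ext _ (fun i => Pwin k i x * phi x) (fun i => phi x * Pwin k i x))
        by (intros; lra).
      rewrite sum_over_scal. lra. }
  rewrite sum_over_scal, sum_over_comm, Rmult_comm. f_equal.
  apply sum_over_ext. intros i. apply sum_words_Pwin.
Qed.
End IncreasingStatistic.
End RHA.

(** * Cesaro limits *)

Lemma Un_cv_const c : Un_cv (fun _ => c) c.
Proof. intros eps He. exists 0%nat. intros. unfold R_dist. rewrite Rminus_diag, Rabs_R0. auto. Qed.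

Lemma Un_cv_sum_over {T} (W : list T) (u : T -> nat -> R) (l c : T -> R) :
  (forall x, Un_cv (u x) (l x)) ->
  Un_cv (fun N => sum_over W (fun x => u x N * c x)) (sum_over W (fun x => l x * c x)).
Proof.
  intros H. induction W as [|x W IH]; [exact (Un_cv_const 0)|].
  rewrite sum_over_cons.
  apply (Un_cv_ext (fun N => u x N * c x + sum_over W (fun y => u y N * c y))).
  - intros; rewrite sum_over_cons; reflexivity.
  - apply CV_plus; auto. apply CV_mult; auto. apply Un_cv_const.
Qed.

Lemma Un_cv_inv_INR_S : Un_cv (fun N => / INR (S N)) 0.
Proof.
  apply cv_infty_cv_0. intros M. destruct (INR_archimed 1 M ltac:(lra)) as [N HN].
  exists N. intros n Hn. apply le_INR in Hn. rewrite S_INR. lra.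
Qed.

Lemma Un_cv_le_eventually v l B K : (forall N, v N <= B + K / INR (S N)) -> Un_cv v l -> l <= B.
Proof.
  intros H Hv. replace B with (B + K * 0) by ring.
  apply (Rle_cv_lim H Hv). apply CV_plus; [apply Un_cv_const|].
  apply CV_mult; [apply Un_cv_const | apply Un_cv_inv_INR_S].
Qed.

Lemma cesaro_ge (E : nat -> R) A N : (forall i, (1 <= i)%nat -> A <= E i) ->
  A <= sum_over (seq 1 (S N)) E / INR (S N).
Proof.
  intros H. assert (0 < INR (S N)) by (apply lt_0_INR; lia).
  apply Rmult_le_reg_r with (INR (S N)); auto. unfold Rdiv.
  rewrite Rmult_assoc, Rinv_l, Rmult_1_r by lra.
  rewrite <- (length_seq (S N) 1) at 1. rewrite Rmult_comm, <- sum_over_const.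
  apply sum_over_le. intros i Hi. apply in_seq in Hi. apply H; lia.
Qed.

Lemma sum_over_seq_le_support (h : nat -> R) L M :
  (forall i, 0 <= h i) -> (forall i, (L <= i)%nat -> h i = 0) ->
  sum_over (seq 1 M) h <= sum_over (seq 1 L) h.
Proof.
  intros Hnn Hz. destruct (Nat.le_gt_cases M L).
  - replace L with (M + (L - M))%nat by lia. rewrite seq_app, sum_over_app.
    assert (0 <= sum_over (seq (1 + M) (L - M)) h); [|lra].
    replace 0 with (sum_over (seq (1 + M) (L - M)) (fun _ => 0)) by (rewrite sum_over_const; ring).
    apply sum_over_le; auto.
  - replace M with (L + (M - L))%nat by lia. rewrite seq_app, sum_over_app.
    rewrite (sum_over_ext_in (seq (1 + L) (M - L)) h (fun _ => 0)), sum_over_const; [lra|].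
    intros i Hi. apply in_seq in Hi. apply Hz; lia.
Qed.

(* The finitely many terms before [L] contribute [O(1/N)] to the Cesaro mean. *)
Lemma cesaro_le (E : nat -> R) B L : (forall i, (L <= i)%nat -> E i <= B) ->
  forall N, sum_over (seq 1 (S N)) E / INR (S N)
            <= B + sum_over (seq 1 L) (fun i => Rmax 0 (E i - B)) / INR (S N).
Proof.
  intros H N. set (h := fun i => if (i <? L)%nat then Rmax 0 (E i - B) else 0).
  assert (0 < INR (S N)) by (apply lt_0_INR; lia).
  assert (HEh : sum_over (seq 1 (S N)) E <= sum_over (seq 1 (S N)) (fun i => B + h i)).
  { apply sum_over_le. intros i _. unfold h. destruct (Nat.ltb_spec i L).
    - pose proof (Rmax_r 0 (E i - B)). lra.
    - specialize (H i ltac:(lia)). lra. }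
  rewrite sum_over_plus, sum_over_const, length_seq in HEh.
  assert (Hh : sum_over (seq 1 (S N)) h <= sum_over (seq 1 L) h).
  { apply sum_over_seq_le_support.
    - intros i. unfold h. destruct (i <? L)%nat; [apply Rmax_l|lra].
    - intros i Hi. unfold h. destruct (Nat.ltb_spec i L); [lia|auto]. }
  rewrite (sum_over_ext_in (seq 1 L) h (fun i => Rmax 0 (E i - B))) in Hh.
  2:{ intros i Hi. apply in_seq in Hi. unfold h. destruct (Nat.ltb_spec i L); [auto|].
      symmetry. apply Rmax_left. specialize (H i ltac:(lia)). lra. }
  apply Rmult_le_reg_r with (INR (S N)); auto. unfold Rdiv.
  rewrite Rmult_plus_distr_r, !Rmult_assoc, Rinv_l by lra. lra.
Qed.

Theorem proposition3
  (k : nat -> nat)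
  (hk_pos : forall n, (1 <= k n)%nat)
  (hk_grow : forall n, (1 <= n)%nat -> (k (n - 1) <= k n <= k (n - 1) * k (n - 1))%nat)
  (mu : list nat -> R)
  (hmu : forall x, Un_cv (cesaro k x) (mu x))
  (phi : list nat -> R)
  (hphi : str_increasing (k O) phi)
  (n j : nat) (hn : (1 <= n)%nat) (hj : (1 <= j)%nat) :
  EX k (j * 2 ^ (n - 1))%nat ((2 ^ (n - 1))%nat) phi
    <= sumR (map (fun x => mu x * phi x) (words (k O) (2 ^ n)%nat))
  /\ sumR (map (fun x => mu x * phi x) (words (k O) (2 ^ n)%nat))
    <= EX k (j * 2 ^ (n + 1))%nat ((2 ^ (n + 1))%nat) phi.
Proof.
  destruct n as [|m]; [lia|]. replace (S m - 1)%nat with m by lia. rewrite Nat.add_1_r.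
  rewrite !(EX_aligned k hk_pos hk_grow phi) by auto.
  fold (sum_over (words (k O) (2 ^ S m)) (fun x => mu x * phi x)).
  pose proof (Un_cv_sum_over (words (k O) (2 ^ S m)) (cesaro k) mu phi hmu) as Hlim.
  cbv beta in Hlim.
  apply (Un_cv_ext _ _ (sum_words_cesaro k phi (2 ^ S m))) in Hlim.
  split.
  - eapply Rle_cv_lim; [| apply Un_cv_const | exact Hlim]. intros N.
    apply cesaro_ge. intros i Hi. apply (EX_lower k hk_pos hk_grow phi hphi); auto.
  - eapply Un_cv_le_eventually; [| exact Hlim]. apply (cesaro_le _ _ (2 ^ S m)%nat).
    intros i Hi. apply (EX_upper k hk_pos hk_grow phi hphi); auto.
Qed.
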